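(* Let $n\in\mathbb{N}$, $r\in\mathbb{N}_0$, let $u(x,t_r)$ be smooth on $\mathbb{R}^2$, and let polynomials (in $z$, coefficients smooth in $(x,t_r)$) $F_n,H_n$ (degree $n$, leading coefficient $1$), $G_{n-1}$, $\tilde F_r,\tilde H_r$ (degree $r$), $\tilde G_{r-1}$ ($\tilde G_{-1}=0$) satisfy for all $z$: $F_{n,x}=-iu_xF_n-2izG_{n-1}$, $H_{n,x}=iu_xH_n+2izG_{n-1}$, $G_{n-1,x}=i(H_n-F_n)$, $u_{xt_r}=-2i\tilde G_{r-1,x}-2(\tilde H_r-\tilde F_r)$, $\tilde F_{r,x}=-iu_x\tilde F_r-2iz\tilde G_{r-1}$, $\tilde H_{r,x}=iu_x\tilde H_r+2iz\tilde G_{r-1}$, and $z^2G_{n-1}^2+zF_nH_n=R_{2n+1}(z)=\prod_{m=0}^{2n}(z-E_m)$ independent of $(x,t_r)$, where $E_0=0$ and $E_m\neq0$ for $m\ge1$. Then $$F_{n,t_r}=2(G_{n-1}\tilde F_r-\tilde G_{r-1}F_n),\qquad zG_{n-1,t_r}=F_n\tilde H_r-\tilde F_rH_n,\qquad H_{n,t_r}=2(\tilde G_{r-1}H_n-G_{n-1}\tilde H_r),$$ and these three equations are equivalent to $V_{n,t_r}=[\tilde V_r,V_n]$.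
   Context: $V_n(z,x,t_r)=\begin{pmatrix}-G_{n-1}&\frac1zF_n\\ H_n&G_{n-1}\end{pmatrix}$ and $\tilde V_r(z,x,t_r)=\begin{pmatrix}-\tilde G_{r-1}&\frac1z\tilde F_r\\ \tilde H_r&\tilde G_{r-1}\end{pmatrix}$; $[A,B]=AB-BA$. *)

From Stdlib Require Import Reals List.
From Coquelicot Require Import Coquelicot.

Open Scope C_scope.

(* Iterated partial derivative of a real function of (x, t):
   [true] = d/dx, [false] = d/dt; the head of the list is applied last. *)
Fixpoint pd (w : list bool) (g : R -> R -> R) : R -> R -> R :=
  match w with
  | nil => g
  | true :: w' => fun x t => Derive (fun y => pd w' g y t) x
  | false :: w' => fun x t => Derive (fun s => pd w' g x s) t
  end.

Definition smoothR (g : R -> R -> R) : Prop :=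
  forall (w : list bool) (x t : R),
    ex_derive (fun y => pd w g y t) x /\
    ex_derive (fun s => pd w g x s) t /\
    continuity_2d_pt (pd w g) x t.

Definition smoothC (f : R -> R -> C) : Prop :=
  smoothR (fun x t => Re (f x t)) /\ smoothR (fun x t => Im (f x t)).

Definition dx (f : R -> R -> C) (x t : R) : C :=
  (Derive (fun y => Re (f y t)) x, Derive (fun y => Im (f y t)) x).
Definition dt (f : R -> R -> C) (x t : R) : C :=
  (Derive (fun s => Re (f x s)) t, Derive (fun s => Im (f x s)) t).

(* Polynomial in z with m coefficients c 0, ..., c (m-1) depending on (x,t):
   polyz c m z x t = sum_{k < m} c k x t * z^k   (polyz c 0 = 0). *)
Fixpoint Cpow (z : C) (k : nat) : C :=
  match k with O => 1 | S k' => z * Cpow z k' end.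
Fixpoint polyz (c : nat -> R -> R -> C) (m : nat) (z : C) (x t : R) : C :=
  match m with
  | O => 0
  | S m' => polyz c m' z x t + c m' x t * Cpow z m'
  end.

Fixpoint prodroots (E : nat -> C) (N : nat) (z : C) : C :=
  match N with
  | O => z - E O
  | S N' => prodroots E N' z * (z - E N)
  end.

Record M2 := mkM2 { m11 : C; m12 : C; m21 : C; m22 : C }.
Definition M2mul (A B : M2) : M2 :=
  mkM2 (m11 A * m11 B + m12 A * m21 B) (m11 A * m12 B + m12 A * m22 B)
       (m21 A * m11 B + m22 A * m21 B) (m21 A * m12 B + m22 A * m22 B).
Definition M2sub (A B : M2) : M2 :=
  mkM2 (m11 A - m11 B) (m12 A - m12 B) (m21 A - m21 B) (m22 A - m22 B).
Definition comm2 (A B : M2) : M2 := M2sub (M2mul A B) (M2mul B A).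

Definition Vmat (F G H z : C) : M2 := mkM2 (- G) (F / z) H G.

From Stdlib Require Import Reals List Lia Lra.
From Coquelicot Require Import Coquelicot.
Open Scope C_scope.

(* The defects
     A = F_{n,t_r} - 2 (G_{n-1} F~_r - G~_{r-1} F_n),
     B = z G_{n-1,t_r} - (F_n H~_r - F~_r H_n),
     C = H_{n,t_r} - 2 (G~_{r-1} H_n - G_{n-1} H~_r)
   are polynomials in z of degree at most n + r.  Exchanging x- and t_r-derivatives
   in the x-equations (and using the equation for u_{x t_r}) shows that they solve the
   linear system  A_x = -i u_x A - 2i B,  B_x = i z (C - A),  while differentiating
   z^2 G_{n-1}^2 + z F_n H_n = R_{2n+1}(z) in t_r gives  2 G_{n-1} B + H_n A + F_n C = 0.
   Compare coefficients from the top: if the coefficients of A and C vanish above z^N,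
   the first equation kills those of B above z^N, the second gives c_N = a_N, and the
   coefficient of z^(n+N) in the constraint is then 2 a_N because F_n and H_n are monic
   of degree n and deg G_{n-1} < n.  Hence A = B = C = 0.  The equivalence with
   V_{n,t_r} = [V~_r, V_n] is entrywise algebra for z <> 0. *)

(** * Derivatives of complex-valued functions of a real variable *)

Definition is_Cderive (f : R -> C) (s : R) (l : C) : Prop :=
  is_derive (fun y => Re (f y)) s (Re l) /\ is_derive (fun y => Im (f y)) s (Im l).

Definition ex_Cderive (f : R -> C) (s : R) : Prop := exists l, is_Cderive f s l.

(* [dx f x t] and [dt f x t] are convertible to [Cderive (fun y => f y t) x] and
   [Cderive (fun s => f x s) t]. *)
Definition Cderive (f : R -> C) (s : R) : C :=
  (Derive (fun y => Re (f y)) s, Derive (fun y => Im (f y)) s).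

Lemma is_Cderive_unique (f : R -> C) (s : R) (l : C) :
  is_Cderive f s l -> Cderive f s = l.
Proof.
  intros [Hre Him]; destruct l as [a b]; unfold Cderive.
  f_equal; now apply is_derive_unique.
Qed.

Lemma is_Cderive_eq (f : R -> C) (s : R) (l1 l2 : C) :
  is_Cderive f s l1 -> is_Cderive f s l2 -> l1 = l2.
Proof.
  intros H1 H2.
  now rewrite <- (is_Cderive_unique _ _ _ H1), (is_Cderive_unique _ _ _ H2).
Qed.

Lemma Cderive_correct (f : R -> C) (s : R) :
  ex_Cderive f s -> is_Cderive f s (Cderive f s).
Proof. intros [l Hl]; now rewrite (is_Cderive_unique _ _ _ Hl). Qed.

Lemma is_Cderive_components (f : R -> C) (s : R) :
  ex_derive (fun y => Re (f y)) s -> ex_derive (fun y => Im (f y)) s ->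
  is_Cderive f s (Cderive f s).
Proof. split; now apply Derive_correct. Qed.

Lemma is_Cderive_replace (f : R -> C) (s : R) (l l' : C) :
  is_Cderive f s l -> l = l' -> is_Cderive f s l'.
Proof. now intros H <-. Qed.

Lemma is_Cderive_ext (f g : R -> C) (s : R) (l : C) :
  (forall y, f y = g y) -> is_Cderive f s l -> is_Cderive g s l.
Proof.
  intros E [Hre Him]; split.
  - apply (is_derive_ext (fun y => Re (f y))); [intros; now rewrite E | exact Hre].
  - apply (is_derive_ext (fun y => Im (f y))); [intros; now rewrite E | exact Him].
Qed.

Lemma Cderive_ext (f g : R -> C) (s : R) :
  (forall y, f y = g y) -> Cderive f s = Cderive g s.
Proof.
  intros E; unfold Cderive; f_equal; apply Derive_ext; intros; now rewrite E.
Qed.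

Lemma is_Cderive_const (c : C) (s : R) : is_Cderive (fun _ => c) s 0.
Proof. split; exact (is_derive_const _ _). Qed.

Lemma Cderive_zero (f : R -> C) (s : R) : (forall y, f y = 0) -> Cderive f s = 0.
Proof.
  intros E; apply is_Cderive_unique.
  apply (is_Cderive_ext (fun _ => 0)); [intros; now rewrite E | apply is_Cderive_const].
Qed.

Lemma is_Cderive_plus (f g : R -> C) (s : R) (lf lg : C) :
  is_Cderive f s lf -> is_Cderive g s lg ->
  is_Cderive (fun y => f y + g y) s (lf + lg).
Proof.
  intros [Hf1 Hf2] [Hg1 Hg2].
  split; [exact (is_derive_plus _ _ _ _ _ Hf1 Hg1) | exact (is_derive_plus _ _ _ _ _ Hf2 Hg2)].
Qed.

Lemma is_Cderive_minus (f g : R -> C) (s : R) (lf lg : C) :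
  is_Cderive f s lf -> is_Cderive g s lg ->
  is_Cderive (fun y => f y - g y) s (lf - lg).
Proof.
  intros [Hf1 Hf2] [Hg1 Hg2].
  split; [exact (is_derive_minus _ _ _ _ _ Hf1 Hg1) | exact (is_derive_minus _ _ _ _ _ Hf2 Hg2)].
Qed.

Lemma is_Cderive_mult (f g : R -> C) (s : R) (lf lg : C) :
  is_Cderive f s lf -> is_Cderive g s lg ->
  is_Cderive (fun y => f y * g y) s (lf * g s + f s * lg).
Proof.
  intros [Hf1 Hf2] [Hg1 Hg2].
  assert (comm : forall a b : R_AbsRing, mult a b = mult b a) by (intros; apply Rmult_comm).
  split.
  - replace (Re (lf * g s + f s * lg)) with
      (Re lf * Re (g s) + Re (f s) * Re lg - (Im lf * Im (g s) + Im (f s) * Im lg))%R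
      by (unfold Re, Im; simpl; ring).
    exact (is_derive_minus _ _ _ _ _ (is_derive_mult _ _ _ _ _ Hf1 Hg1 comm)
             (is_derive_mult _ _ _ _ _ Hf2 Hg2 comm)).
  - replace (Im (lf * g s + f s * lg)) with
      (Re lf * Im (g s) + Re (f s) * Im lg + (Im lf * Re (g s) + Im (f s) * Re lg))%R
      by (unfold Re, Im; simpl; ring).
    exact (is_derive_plus _ _ _ _ _ (is_derive_mult _ _ _ _ _ Hf1 Hg2 comm)
             (is_derive_mult _ _ _ _ _ Hf2 Hg1 comm)).
Qed.

Lemma is_Cderive_RtoC (g : R -> R) (s l : R) :
  is_derive g s l -> is_Cderive (fun y => RtoC (g y)) s (RtoC l).
Proof. intros Hg; split; [exact Hg | exact (is_derive_const _ _)]. Qed.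

Lemma ex_Cderive_const (c : C) (s : R) : ex_Cderive (fun _ => c) s.
Proof. exists 0; apply is_Cderive_const. Qed.

Lemma ex_Cderive_mult (f g : R -> C) (s : R) :
  ex_Cderive f s -> ex_Cderive g s -> ex_Cderive (fun y => f y * g y) s.
Proof. intros [lf Hf] [lg Hg]; eexists; exact (is_Cderive_mult _ _ _ _ _ Hf Hg). Qed.

Lemma ex_Cderive_plus (f g : R -> C) (s : R) :
  ex_Cderive f s -> ex_Cderive g s -> ex_Cderive (fun y => f y + g y) s.
Proof. intros [lf Hf] [lg Hg]; eexists; exact (is_Cderive_plus _ _ _ _ _ Hf Hg). Qed.

Ltac Cderive_rules :=
  repeat match goal with
  | |- is_Cderive (fun _ => ?c) ?s _ => apply (is_Cderive_const c s)
  | |- is_Cderive (fun y => @?f y + @?g y) ?s _ => apply (is_Cderive_plus f g s)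
  | |- is_Cderive (fun y => @?f y - @?g y) ?s _ => apply (is_Cderive_minus f g s)
  | |- is_Cderive (fun y => @?f y * @?g y) ?s _ => apply (is_Cderive_mult f g s)
  | |- is_Cderive (fun y => RtoC (@?g y)) ?s _ => apply (is_Cderive_RtoC g s)
  end.

Lemma Cmult_eq_0_l (a w : C) : a <> 0 -> a * w = 0 -> w = 0.
Proof.
  intros Ha E.
  replace w with (/ a * (a * w)) by (field; exact Ha).
  rewrite E; ring.
Qed.

Lemma Ci_sqr : Ci * Ci = -1.
Proof. apply injective_projections; simpl; ring. Qed.

(** * Polynomials in z with coefficients depending on a real variable *)

Fixpoint peval (c : nat -> C) (m : nat) (z : C) : C :=
  match m with
  | O => 0
  | S m' => peval c m' z + c m' * z ^ m'
  end.

Lemma polyz_peval (c : nat -> R -> R -> C) (m : nat) (z : C) (x t : R) :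
  polyz c m z x t = peval (fun k => c k x t) m z.
Proof. induction m as [|m IH]; simpl; [reflexivity | now rewrite IH]. Qed.

Lemma peval_ext (c d : nat -> C) (m : nat) (z : C) :
  (forall k, (k < m)%nat -> c k = d k) -> peval c m z = peval d m z.
Proof.
  induction m as [|m IH]; intros E; simpl; [reflexivity|].
  rewrite IH by (intros; apply E; lia).
  now rewrite (E m) by lia.
Qed.

Lemma peval_pad (c : nat -> C) (m m' : nat) (z : C) :
  (forall k, (m <= k)%nat -> c k = 0) -> (m <= m')%nat -> peval c m' z = peval c m z.
Proof.
  intros Hc Hm; induction Hm as [|m' Hm IH]; simpl; [reflexivity|].
  rewrite IH, Hc by lia; ring.
Qed.

Lemma peval_plus (c d : nat -> C) (m : nat) (z : C) :
  peval (fun k => c k + d k) m z = peval c m z + peval d m z.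
Proof. induction m as [|m IH]; simpl; [ring | rewrite IH; ring]. Qed.

Lemma peval_minus (c d : nat -> C) (m : nat) (z : C) :
  peval (fun k => c k - d k) m z = peval c m z - peval d m z.
Proof. induction m as [|m IH]; simpl; [ring | rewrite IH; ring]. Qed.

Lemma peval_scal (a : C) (c : nat -> C) (m : nat) (z : C) :
  peval (fun k => a * c k) m z = a * peval c m z.
Proof. induction m as [|m IH]; simpl; [ring | rewrite IH; ring]. Qed.

Lemma peval_shift (c : nat -> C) (m : nat) (z : C) :
  z * peval c m z = peval (fun k => match k with O => 0 | S k' => c k' end) (S m) z.
Proof. induction m as [|m IH]; simpl in *; [ring | rewrite <- IH; ring]. Qed.

Lemma peval_low (c : nat -> C) (m : nat) (z : C) :
  peval c (S m) z = c O + z * peval (fun k => c (S k)) m z.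
Proof.
  induction m as [|m IH]; [simpl; ring|].
  change (peval c (S (S m)) z) with (peval c (S m) z + c (S m) * (z * z ^ m)).
  rewrite IH; simpl; ring.
Qed.

Lemma peval_bounded (m : nat) (c : nat -> C) :
  exists K, forall z, (Cmod z <= 1)%R -> (Cmod (peval c m z) <= K)%R.
Proof.
  revert c; induction m as [|m IH]; intros c.
  - exists 0%R; intros z _; simpl; rewrite Cmod_0; lra.
  - destruct (IH (fun k => c (S k))) as [K HK].
    exists (Cmod (c O) + K)%R; intros z Hz; rewrite peval_low.
    eapply Rle_trans; [apply Cmod_triangle|]; rewrite Cmod_mult.
    pose proof (HK z Hz); pose proof (Cmod_ge_0 z);
      pose proof (Cmod_ge_0 (peval (fun k => c (S k)) m z)); nra.
Qed.

(* For real 0 < e <= 1, c 0 = - e * peval (fun k => c (S k)) m e, hence |c 0| <= e K. *)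
Lemma peval_coef0_zero (c : nat -> C) (m : nat) :
  (forall z : C, z <> 0 -> peval c (S m) z = 0) -> c O = 0.
Proof.
  intros H; destruct (peval_bounded m (fun k => c (S k))) as [K HK].
  apply Cmod_eq_0, Rle_antisym; [|apply Cmod_ge_0].
  apply Rle_plus_epsilon; intros eps Heps.
  set (e := (eps / (eps + Rabs K))%R).
  assert (He : (0 < e /\ e <= 1 /\ e * Rabs K <= eps)%R).
  { pose proof (Rabs_pos K).
    assert (e * (eps + Rabs K) = eps)%R by (unfold e; field; lra).
    split; [apply Rdiv_lt_0_compat; lra | nra]. }
  assert (Hz : RtoC e <> 0) by (intros E; injection E; lra).
  assert (E : c O = - (RtoC e * peval (fun k => c (S k)) m (RtoC e))).
  { specialize (H _ Hz); rewrite peval_low in H.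
    replace (c O) with (c O + RtoC e * peval (fun k => c (S k)) m (RtoC e)
                        - RtoC e * peval (fun k => c (S k)) m (RtoC e)) by ring.
    rewrite H; ring. }
  rewrite E, Cmod_opp, Cmod_mult, Cmod_R, Rabs_pos_eq by lra.
  assert (Cmod (peval (fun k => c (S k)) m (RtoC e)) <= K)%R
    by (apply HK; rewrite Cmod_R, Rabs_pos_eq; lra).
  pose proof (Rle_abs K); nra.
Qed.

Lemma peval_coef_zero (c : nat -> C) (m : nat) :
  (forall z : C, z <> 0 -> peval c m z = 0) -> forall k, (k < m)%nat -> c k = 0.
Proof.
  revert c; induction m as [|m IH]; intros c H k Hk; [lia|].
  assert (H0 : c O = 0) by exact (peval_coef0_zero c m H).
  destruct k as [|k]; [exact H0|].
  apply (IH (fun k => c (S k))); [|lia].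
  intros z Hz; apply (Cmult_eq_0_l z); [exact Hz|].
  specialize (H z Hz); rewrite peval_low, H0 in H.
  rewrite <- H; ring.
Qed.

Lemma peval_coef_eq (c d : nat -> C) (m : nat) :
  (forall z : C, z <> 0 -> peval c m z = peval d m z) -> forall k, (k < m)%nat -> c k = d k.
Proof.
  intros H k Hk; apply Ceq_minus.
  apply (peval_coef_zero (fun k => c k - d k) m); [|exact Hk].
  intros z Hz; rewrite peval_minus, H by exact Hz; ring.
Qed.

Lemma is_Cderive_peval (c : nat -> R -> C) (l : nat -> C) (m : nat) (z : C) (s : R) :
  (forall k, is_Cderive (c k) s (l k)) ->
  is_Cderive (fun y => peval (fun k => c k y) m z) s (peval l m z).
Proof.
  intros Hc; induction m as [|m IH]; simpl; [apply is_Cderive_const|].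
  eapply is_Cderive_replace.
  - apply is_Cderive_plus; [exact IH|].
    apply is_Cderive_mult; [apply Hc | apply is_Cderive_const].
  - cbv beta; ring.
Qed.

Lemma Cderive_peval (c : nat -> R -> C) (m : nat) (z : C) (s : R) :
  (forall k, ex_Cderive (c k) s) ->
  Cderive (fun y => peval (fun k => c k y) m z) s = peval (fun k => Cderive (c k) s) m z.
Proof.
  intros Hc; apply is_Cderive_unique, is_Cderive_peval.
  intros k; apply Cderive_correct, Hc.
Qed.

Definition poly_lt (m : nat) (P : C -> R -> C) : Prop :=
  exists c : nat -> R -> C,
    (forall k y, ex_Cderive (c k) y) /\ (forall k y, (m <= k)%nat -> c k y = 0) /\
    forall z y, P z y = peval (fun k => c k y) m z.

Lemma poly_lt_ext (m : nat) (P Q : C -> R -> C) :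
  (forall z y, P z y = Q z y) -> poly_lt m P -> poly_lt m Q.
Proof.
  intros E [c [Hc [Hc0 HP]]]; exists c; split; [exact Hc | split; [exact Hc0|]].
  intros z y; rewrite <- E; apply HP.
Qed.

Lemma poly_lt_mono (m m' : nat) (P : C -> R -> C) :
  poly_lt m P -> (m <= m')%nat -> poly_lt m' P.
Proof.
  intros [c [Hc [Hc0 HP]]] Hm; exists c; split; [exact Hc | split].
  - intros k y Hk; apply Hc0; lia.
  - intros z y; rewrite HP; symmetry; apply peval_pad; [intros; apply Hc0 | ]; assumption.
Qed.

Lemma poly_lt_peval (c : nat -> R -> C) (m : nat) :
  (forall k y, ex_Cderive (c k) y) -> poly_lt m (fun z y => peval (fun k => c k y) m z).
Proof.
  intros Hc; exists (fun k y => if (k <? m)%nat then c k y else 0); split; [|split].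
  - intros k y; destruct (k <? m)%nat; [apply Hc | apply ex_Cderive_const].
  - intros k y Hk; destruct (Nat.ltb_spec k m); [lia | reflexivity].
  - intros z y; apply peval_ext; intros k Hk.
    destruct (Nat.ltb_spec k m); [reflexivity | lia].
Qed.

Lemma poly_lt_plus (m : nat) (P Q : C -> R -> C) :
  poly_lt m P -> poly_lt m Q -> poly_lt m (fun z y => P z y + Q z y).
Proof.
  intros [c [Hc [Hc0 HP]]] [d [Hd [Hd0 HQ]]].
  exists (fun k y => c k y + d k y); split; [|split].
  - intros; now apply ex_Cderive_plus.
  - intros k y Hk; rewrite Hc0, Hd0 by exact Hk; ring.
  - intros z y; now rewrite HP, HQ, peval_plus.
Qed.

Lemma poly_lt_scal (m : nat) (f : R -> C) (P : C -> R -> C) :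
  (forall y, ex_Cderive f y) -> poly_lt m P -> poly_lt m (fun z y => f y * P z y).
Proof.
  intros Hf [c [Hc [Hc0 HP]]].
  exists (fun k y => f y * c k y); split; [|split].
  - intros; now apply ex_Cderive_mult.
  - intros k y Hk; rewrite Hc0 by exact Hk; ring.
  - intros z y; now rewrite HP, peval_scal.
Qed.

Lemma poly_lt_cscal (m : nat) (a : C) (P : C -> R -> C) :
  poly_lt m P -> poly_lt m (fun z y => a * P z y).
Proof. apply (poly_lt_scal m (fun _ => a)); intros; apply ex_Cderive_const. Qed.

Lemma poly_lt_minus (m : nat) (P Q : C -> R -> C) :
  poly_lt m P -> poly_lt m Q -> poly_lt m (fun z y => P z y - Q z y).
Proof.
  intros HP HQ; apply (poly_lt_ext m (fun z y => P z y + (-1) * Q z y)); [intros; ring|].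
  now apply poly_lt_plus, poly_lt_cscal.
Qed.

Lemma poly_lt_shift (m : nat) (P : C -> R -> C) :
  poly_lt m P -> poly_lt (S m) (fun z y => z * P z y).
Proof.
  intros [c [Hc [Hc0 HP]]].
  exists (fun k y => match k with O => (0 : C) | S k' => c k' y end); split; [|split].
  - intros [|k] y; [apply ex_Cderive_const | apply Hc].
  - intros [|k] y Hk; [lia | apply Hc0; lia].
  - intros z y; rewrite HP; apply peval_shift.
Qed.

Lemma poly_lt_zpow (k m : nat) (P : C -> R -> C) :
  poly_lt m P -> poly_lt (k + m) (fun z y => z ^ k * P z y).
Proof.
  intros HP; induction k as [|k IH]; simpl.
  - apply (poly_lt_ext m P); [intros; ring | exact HP].
  - apply (poly_lt_ext (S (k + m)) (fun z y => z * (z ^ k * P z y))); [intros; ring|].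
    now apply poly_lt_shift.
Qed.

Lemma poly_lt_mul (m m' k : nat) (P Q : C -> R -> C) :
  poly_lt m P -> poly_lt (S m') Q -> (m + m' <= k)%nat ->
  poly_lt k (fun z y => P z y * Q z y).
Proof.
  intros HP [d [Hd [_ HQ]]] Hk.
  apply (poly_lt_ext k (fun z y => P z y * peval (fun j => d j y) (S m') z));
    [intros; now rewrite HQ|].
  apply (poly_lt_mono (m + m')); [clear HQ Hk | exact Hk].
  induction m' as [|m' IH].
  - rewrite Nat.add_0_r.
    apply (poly_lt_ext m (fun z y => d O y * P z y)); [intros; simpl; ring|].
    now apply poly_lt_scal.
  - apply (poly_lt_ext (m + S m') (fun z y => P z y * peval (fun j => d j y) (S m') z
                                    + d (S m') y * (z ^ (S m') * P z y)));
      [intros; cbn [peval]; ring|].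
    apply poly_lt_plus.
    + apply (poly_lt_mono (m + m')); [exact IH | lia].
    + apply poly_lt_scal; [apply Hd|].
      apply (poly_lt_mono (S m' + m)); [now apply poly_lt_zpow | lia].
Qed.

Lemma poly_lt_leading (m : nat) (Q : C -> R -> C) (w : C) (y : R) :
  poly_lt m Q -> (forall z : C, z <> 0 -> w * z ^ m + Q z y = 0) -> w = 0.
Proof.
  intros [q [_ [_ HQ]]] H.
  set (c := fun k => if (k =? m)%nat then w else q k y).
  replace w with (c m) by (unfold c; now rewrite Nat.eqb_refl).
  apply (peval_coef_zero c (S m)); [|lia].
  intros z Hz; simpl.
  rewrite (peval_ext c (fun k => q k y)), <- HQ, <- (H z Hz).
  - unfold c; rewrite Nat.eqb_refl; ring.
  - intros k Hk; unfold c; destruct (Nat.eqb_spec k m); [lia | reflexivity].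
Qed.

(** * Descent on the coefficients of the defects *)

Lemma nat_down_ind (P : nat -> Prop) (M : nat) :
  P M -> (forall N, P (S N) -> P N) -> P O.
Proof. induction M as [|M IH]; intros HM step; [exact HM | apply IH; [apply step, HM | exact step]]. Qed.

Lemma peval_stable (c : nat -> C) (m m' : nat) (z : C) :
  (forall k, (m <= k)%nat -> c k = 0) -> (forall k, (m' <= k)%nat -> c k = 0) ->
  peval c m z = peval c m' z.
Proof.
  intros Hm Hm'; destruct (Nat.le_ge_cases m m');
    [symmetry; now apply peval_pad | now apply peval_pad].
Qed.

Lemma leading_coef_vanishes (n N : nat) (F G H : C -> R -> C) (a b c : nat -> R -> C) (y : R) :
  poly_lt n G -> poly_lt n (fun z y => F z y - z ^ n) ->
  poly_lt n (fun z y => H z y - z ^ n) ->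
  (forall k y, ex_Cderive (a k) y) -> (forall k y, ex_Cderive (b k) y) ->
  (forall k y, ex_Cderive (c k) y) -> c N y = a N y ->
  (forall z : C, z <> 0 ->
     2 * G z y * peval (fun k => b k y) (S N) z + H z y * peval (fun k => a k y) (S N) z
     + F z y * peval (fun k => c k y) (S N) z = 0) ->
  a N y = 0.
Proof.
  intros HG HF HH Ha Hb Hc hca con.
  set (lower := fun z y =>
         2 * (G z y * peval (fun k => b k y) (S N) z)
         + (H z y - z ^ n) * peval (fun k => a k y) (S N) z
         + (F z y - z ^ n) * peval (fun k => c k y) (S N) z
         + z ^ n * (peval (fun k => a k y) N z + peval (fun k => c k y) N z)).
  assert (Hlower : poly_lt (n + N) lower).
  { apply poly_lt_plus; [apply poly_lt_plus; [apply poly_lt_plus|]|].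
    - apply poly_lt_cscal, (poly_lt_mul n N); [exact HG | now apply poly_lt_peval | lia].
    - apply (poly_lt_mul n N); [exact HH | now apply poly_lt_peval | lia].
    - apply (poly_lt_mul n N); [exact HF | now apply poly_lt_peval | lia].
    - apply (poly_lt_zpow n N), poly_lt_plus; now apply poly_lt_peval. }
  apply (Cmult_eq_0_l 2); [intros E; injection E; lra|].
  apply (poly_lt_leading (n + N) lower _ y Hlower).
  intros z Hz; rewrite <- (con z Hz); unfold lower; cbn [peval].
  rewrite Cpow_add_r, hca; ring.
Qed.

Section CoefficientDescent.

Variables (n M : nat) (ux : R -> C) (F G H : C -> R -> C) (a b c : nat -> R -> C).

Hypothesis G_poly : poly_lt n G.
Hypothesis F_monic : poly_lt n (fun z y => F z y - z ^ n).
Hypothesis H_monic : poly_lt n (fun z y => H z y - z ^ n).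
Hypothesis a_diff : forall k y, ex_Cderive (a k) y.
Hypothesis b_diff : forall k y, ex_Cderive (b k) y.
Hypothesis c_diff : forall k y, ex_Cderive (c k) y.
Hypothesis a_high : forall k y, (M <= k)%nat -> a k y = 0.
Hypothesis b_high : forall k y, (M <= k)%nat -> b k y = 0.
Hypothesis c_high : forall k y, (M <= k)%nat -> c k y = 0.
Hypothesis a_ode : forall k y, Cderive (a k) y = - Ci * ux y * a k y - 2 * Ci * b k y.
Hypothesis b_ode : forall k y, Cderive (b (S k)) y = Ci * (c k y - a k y).
Hypothesis constraint : forall (z : C) y, z <> 0 ->
  2 * G z y * peval (fun k => b k y) M z + H z y * peval (fun k => a k y) M z
  + F z y * peval (fun k => c k y) M z = 0.

Lemma b_vanishes_with_a (k : nat) : (forall y, a k y = 0) -> forall y, b k y = 0.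
Proof.
  intros ha y; pose proof (a_ode k y) as E.
  rewrite Cderive_zero, ha in E by exact ha.
  apply (Cmult_eq_0_l (2 * Ci));
    [apply Cmult_neq_0; [intros E'; injection E'; lra | exact Ci_nz]|].
  replace (2 * Ci * b k y) with (- (- Ci * ux y * 0 - 2 * Ci * b k y)) by ring.
  rewrite <- E; ring.
Qed.

Lemma descent_step (N : nat) :
  (forall k y, (S N <= k)%nat -> a k y = 0 /\ c k y = 0) ->
  forall k y, (N <= k)%nat -> a k y = 0 /\ c k y = 0.
Proof.
  intros high.
  assert (hb : forall k y, (S N <= k)%nat -> b k y = 0)
    by (intros k y hk; apply b_vanishes_with_a; intros y'; apply (high k y' hk)).
  assert (hca : forall y, c N y = a N y).
  { intros y; apply Ceq_minus, (Cmult_eq_0_l Ci); [exact Ci_nz|].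
    rewrite <- b_ode; apply Cderive_zero; intros; apply hb; lia. }
  assert (trunc : forall e : nat -> R -> C,
             (forall k y, (M <= k)%nat -> e k y = 0) ->
             (forall k y, (S N <= k)%nat -> e k y = 0) ->
             forall z y, peval (fun k => e k y) M z = peval (fun k => e k y) (S N) z)
    by (intros e hM hN z y; apply peval_stable; intros k hk; [apply hM | apply hN]; exact hk).
  assert (haN : forall y, a N y = 0).
  { intros y; apply (leading_coef_vanishes n N F G H a b c y); auto.
    intros z Hz; rewrite <- (constraint z y Hz), (trunc b b_high hb).
    rewrite (trunc a a_high), (trunc c c_high); [reflexivity | ..];
      intros k y' hk; now apply (high k y' hk). }
  intros k y hk; destruct (Nat.eq_dec k N) as [-> | hkN].
  - now rewrite hca, haN.
  - apply high; lia.
Qed.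

Lemma coefs_vanish (k : nat) (y : R) : a k y = 0 /\ b k y = 0 /\ c k y = 0.
Proof.
  assert (low : forall k y, (O <= k)%nat -> a k y = 0 /\ c k y = 0).
  { apply (nat_down_ind (fun N => forall k y, (N <= k)%nat -> a k y = 0 /\ c k y = 0) M).
    - intros k' y' hk; split; [apply a_high | apply c_high]; exact hk.
    - exact descent_step. }
  split; [|split]; [apply low; lia | | apply low; lia].
  apply b_vanishes_with_a; intros y'; apply (low k y'); lia.
Qed.

End CoefficientDescent.

Lemma lax_defects_vanish (n M : nat) (ux : R -> C) (F G H DF DG DH : C -> R -> C) :
  poly_lt n G -> poly_lt n (fun z y => F z y - z ^ n) ->
  poly_lt n (fun z y => H z y - z ^ n) ->
  poly_lt M DF -> poly_lt M DG -> poly_lt M DH ->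
  (forall z y, Cderive (DF z) y = - Ci * ux y * DF z y - 2 * Ci * DG z y) ->
  (forall z y, Cderive (DG z) y = Ci * z * (DH z y - DF z y)) ->
  (forall (z : C) y, z <> 0 -> 2 * G z y * DG z y + H z y * DF z y + F z y * DH z y = 0) ->
  forall z y, DF z y = 0 /\ DG z y = 0 /\ DH z y = 0.
Proof.
  intros HG HF HH [a [Ha [Ha0 EF]]] [b [Hb [Hb0 EG]]] [c [Hc [Hc0 EH]]] dF dG con.
  assert (a_ode : forall k y, Cderive (a k) y = - Ci * ux y * a k y - 2 * Ci * b k y).
  { intros k y; destruct (Nat.lt_ge_cases k M) as [hk | hk].
    - apply (peval_coef_eq (fun k => Cderive (a k) y)
               (fun k => - Ci * ux y * a k y - 2 * Ci * b k y) M); [|exact hk].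
      intros z _; rewrite <- Cderive_peval by auto.
      rewrite <- (Cderive_ext (DF z)), dF, EF, EG by (intros; apply EF).
      now rewrite peval_minus, !peval_scal.
    - rewrite (Cderive_zero (a k)) by (intros; now apply Ha0).
      rewrite Ha0, Hb0 by exact hk; ring. }
  assert (b_ode : forall k y, Cderive (b (S k)) y = Ci * (c k y - a k y)).
  { intros k y; destruct (Nat.lt_ge_cases k M) as [hk | hk].
    - apply (peval_coef_eq (fun k => Cderive (b k) y)
               (fun k => match k with O => 0 | S k' => Ci * (c k' y - a k' y) end) (S M));
        [|lia].
      intros z _.
      rewrite (peval_pad _ M (S M)) by (try lia; intros; apply Cderive_zero; intros; now apply Hb0).
      rewrite <- Cderive_peval by auto.
      rewrite <- (Cderive_ext (DG z)), dG, EF, EH by (intros; apply EG).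
      rewrite <- peval_shift, peval_scal, peval_minus; ring.
    - rewrite (Cderive_zero (b (S k))) by (intros; apply Hb0; lia).
      rewrite Ha0, Hc0 by exact hk; ring. }
  assert (all0 : forall k y, a k y = 0 /\ b k y = 0 /\ c k y = 0).
  { intros k y; apply (coefs_vanish n M ux F G H); auto.
    intros z y' hz; rewrite <- EF, <- EG, <- EH; now apply con. }
  intros z y; rewrite EF, EG, EH.
  split; [|split]; rewrite (peval_pad _ O M);
    solve [reflexivity | intros k _; apply (all0 k y) | lia].
Qed.

(** * Polynomials with smooth coefficients *)

Lemma smoothR_Schwarz (g : R -> R -> R) (x t : R) :
  smoothR g ->
  Derive (fun y => Derive (fun s => g y s) t) x = Derive (fun s => Derive (fun y => g y s) x) t.
Proof.
  intros Hg; apply Schwarz.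
  - exists (mkposreal 1 Rlt_0_1); intros y s _ _.
    split; [|split; [|split]].
    + exact (proj1 (Hg nil y s)).
    + exact (proj1 (proj2 (Hg nil y s))).
    + exact (proj1 (Hg (false :: nil) y s)).
    + exact (proj1 (proj2 (Hg (true :: nil) y s))).
  - exact (proj2 (proj2 (Hg (true :: false :: nil) x t))).
  - exact (proj2 (proj2 (Hg (false :: true :: nil) x t))).
Qed.

Lemma smoothC_dx (f : R -> R -> C) (x t : R) :
  smoothC f -> is_Cderive (fun y => f y t) x (dx f x t).
Proof.
  intros [Hre Him]; apply is_Cderive_components;
    [exact (proj1 (Hre nil x t)) | exact (proj1 (Him nil x t))].
Qed.

Lemma smoothC_dt (f : R -> R -> C) (x t : R) :
  smoothC f -> is_Cderive (fun s => f x s) t (dt f x t).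
Proof.
  intros [Hre Him]; apply is_Cderive_components;
    [exact (proj1 (proj2 (Hre nil x t))) | exact (proj1 (proj2 (Him nil x t)))].
Qed.

Lemma smoothC_dx_dt (f : R -> R -> C) (x t : R) :
  smoothC f -> is_Cderive (fun s => dx f x s) t (dt (dx f) x t).
Proof.
  intros [Hre Him]; apply is_Cderive_components;
    [exact (proj1 (proj2 (Hre (true :: nil) x t))) | exact (proj1 (proj2 (Him (true :: nil) x t)))].
Qed.

Lemma smoothC_dt_dx (f : R -> R -> C) (x t : R) :
  smoothC f -> is_Cderive (fun y => dt f y t) x (dt (dx f) x t).
Proof.
  intros [Hre Him]; split.
  - replace (Re (dt (dx f) x t)) with (Derive (fun y => Derive (fun s => Re (f y s)) t) x)
      by exact (smoothR_Schwarz (fun y s => Re (f y s)) x t Hre).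
    exact (Derive_correct _ _ (proj1 (Hre (false :: nil) x t))).
  - replace (Im (dt (dx f) x t)) with (Derive (fun y => Derive (fun s => Im (f y s)) t) x)
      by exact (smoothR_Schwarz (fun y s => Im (f y s)) x t Him).
    exact (Derive_correct _ _ (proj1 (Him (false :: nil) x t))).
Qed.

Lemma is_Cderive_polyz_x (c : nat -> R -> R -> C) (m : nat) (z : C) (x t : R) (l : nat -> C) :
  (forall k, is_Cderive (fun y => c k y t) x (l k)) ->
  is_Cderive (fun y => polyz c m z y t) x (peval l m z).
Proof.
  intros Hl; apply (is_Cderive_ext (fun y => peval (fun k => c k y t) m z));
    [intros; symmetry; apply polyz_peval | exact (is_Cderive_peval (fun k y => c k y t) l m z x Hl)].
Qed.

Lemma is_Cderive_polyz_t (c : nat -> R -> R -> C) (m : nat) (z : C) (x t : R) (l : nat -> C) :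
  (forall k, is_Cderive (fun s => c k x s) t (l k)) ->
  is_Cderive (fun s => polyz c m z x s) t (peval l m z).
Proof.
  intros Hl; apply (is_Cderive_ext (fun s => peval (fun k => c k x s) m z));
    [intros; symmetry; apply polyz_peval | exact (is_Cderive_peval (fun k s => c k x s) l m z t Hl)].
Qed.

Section SmoothPolynomials.

Variables (c : nat -> R -> R -> C) (m : nat).
Hypothesis c_smooth : forall k, smoothC (c k).

Lemma dx_polyz (z : C) (x t : R) :
  dx (polyz c m z) x t = polyz (fun k => dx (c k)) m z x t.
Proof.
  rewrite polyz_peval; apply is_Cderive_unique, is_Cderive_polyz_x.
  intros; now apply smoothC_dx.
Qed.

Lemma dt_polyz (z : C) (x t : R) :
  dt (polyz c m z) x t = polyz (fun k => dt (c k)) m z x t.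
Proof.
  rewrite polyz_peval; apply is_Cderive_unique, is_Cderive_polyz_t.
  intros; now apply smoothC_dt.
Qed.

Lemma polyz_dx_correct (z : C) (x t : R) :
  is_Cderive (fun y => polyz c m z y t) x (dx (polyz c m z) x t).
Proof.
  rewrite dx_polyz, polyz_peval; apply is_Cderive_polyz_x.
  intros; now apply smoothC_dx.
Qed.

Lemma polyz_dt_correct (z : C) (x t : R) :
  is_Cderive (fun s => polyz c m z x s) t (dt (polyz c m z) x t).
Proof.
  rewrite dt_polyz, polyz_peval; apply is_Cderive_polyz_t.
  intros; now apply smoothC_dt.
Qed.

Lemma polyz_mixed_partials (z : C) (x t : R) (Q : R -> R -> C) (l : C) :
  (forall x s, dx (polyz c m z) x s = Q x s) -> is_Cderive (fun s => Q x s) t l ->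
  is_Cderive (fun y => dt (polyz c m z) y t) x l.
Proof.
  intros EQ HQ.
  assert (mixed : peval (fun k => dt (dx (c k)) x t) m z = l).
  { apply (is_Cderive_eq (fun s => Q x s) t); [|exact HQ].
    apply (is_Cderive_ext (fun s => polyz (fun k => dx (c k)) m z x s));
      [intros; rewrite <- EQ; symmetry; apply dx_polyz|].
    apply is_Cderive_polyz_t; intros; now apply smoothC_dx_dt. }
  rewrite <- mixed.
  apply (is_Cderive_ext (fun y => polyz (fun k => dt (c k)) m z y t));
    [intros; symmetry; apply dt_polyz|].
  apply is_Cderive_polyz_x; intros; now apply smoothC_dt_dx.
Qed.

Lemma poly_lt_polyz (t : R) : poly_lt m (fun z y => polyz c m z y t).
Proof.
  apply (poly_lt_ext m (fun z y => peval (fun k => c k y t) m z));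
    [intros; symmetry; apply polyz_peval|].
  apply (poly_lt_peval (fun k y => c k y t)); intros; eexists; now apply smoothC_dx.
Qed.

Lemma poly_lt_dt_polyz (t : R) : poly_lt m (fun z y => dt (polyz c m z) y t).
Proof.
  apply (poly_lt_ext m (fun z y => peval (fun k => dt (c k) y t) m z));
    [intros; rewrite dt_polyz; symmetry; apply polyz_peval|].
  apply (poly_lt_peval (fun k y => dt (c k) y t)); intros; eexists; now apply smoothC_dt_dx.
Qed.

End SmoothPolynomials.

Ltac polyz_leaf :=
  match goal with
  | |- is_Cderive (fun y => polyz _ _ _ y _) _ _ => apply polyz_dx_correct; assumption
  | |- is_Cderive (fun s => polyz _ _ _ _ s) _ _ => apply polyz_dt_correct; assumption
  end.

(** * The t_r-equations *)

Section LaxEquations.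

Variables (n r : nat) (u : R -> R -> R) (Fc Gc Hc Ftc Gtc Htc : nat -> R -> R -> C).
Variable (Rcurve : C -> C).

(* [Gn] is G_{n-1}; [Fr], [Gr], [Hr] are F~_r, G~_{r-1}, H~_r. *)
Local Notation Fn := (polyz Fc (S n)).
Local Notation Gn := (polyz Gc n).
Local Notation Hn := (polyz Hc (S n)).
Local Notation Fr := (polyz Ftc (S r)).
Local Notation Gr := (polyz Gtc r).
Local Notation Hr := (polyz Htc (S r)).
Local Notation ux x t := (RtoC (Derive (fun y => u y t) x)).
Local Notation uxt x t := (RtoC (Derive (fun s => Derive (fun y => u y s) x) t)).

Hypothesis u_smooth : smoothR u.
Hypothesis Fc_smooth : forall k, smoothC (Fc k).
Hypothesis Gc_smooth : forall k, smoothC (Gc k).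
Hypothesis Hc_smooth : forall k, smoothC (Hc k).
Hypothesis Ftc_smooth : forall k, smoothC (Ftc k).
Hypothesis Gtc_smooth : forall k, smoothC (Gtc k).
Hypothesis Htc_smooth : forall k, smoothC (Htc k).
Hypothesis Fc_monic : forall x t, Fc n x t = 1.
Hypothesis Hc_monic : forall x t, Hc n x t = 1.
Hypothesis Fn_x : forall z x t,
  dx (Fn z) x t = - Ci * ux x t * Fn z x t - 2 * Ci * z * Gn z x t.
Hypothesis Hn_x : forall z x t,
  dx (Hn z) x t = Ci * ux x t * Hn z x t + 2 * Ci * z * Gn z x t.
Hypothesis Gn_x : forall z x t, dx (Gn z) x t = Ci * (Hn z x t - Fn z x t).
Hypothesis u_xt : forall z x t,
  uxt x t = - 2 * Ci * dx (Gr z) x t - 2 * (Hr z x t - Fr z x t).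
Hypothesis Fr_x : forall z x t,
  dx (Fr z) x t = - Ci * ux x t * Fr z x t - 2 * Ci * z * Gr z x t.
Hypothesis Hr_x : forall z x t,
  dx (Hr z) x t = Ci * ux x t * Hr z x t + 2 * Ci * z * Gr z x t.
Hypothesis curve : forall z x t,
  z * z * (Gn z x t * Gn z x t) + z * Fn z x t * Hn z x t = Rcurve z.

Local Notation defF z x t := (dt (Fn z) x t - 2 * (Gn z x t * Fr z x t - Gr z x t * Fn z x t)).
Local Notation defG z x t := (z * dt (Gn z) x t - (Fn z x t * Hr z x t - Fr z x t * Hn z x t)).
Local Notation defH z x t := (dt (Hn z) x t - 2 * (Gr z x t * Hn z x t - Gn z x t * Hr z x t)).

Lemma ux_dt (x t : R) :
  is_derive (fun s => Derive (fun y => u y s) x) t (Derive (fun s => Derive (fun y => u y s) x) t).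
Proof. exact (Derive_correct _ _ (proj1 (proj2 (u_smooth (true :: nil) x t)))). Qed.

Lemma Fn_xt (z : C) (x t : R) :
  is_Cderive (fun y => dt (Fn z) y t) x
    (- Ci * uxt x t * Fn z x t - Ci * ux x t * dt (Fn z) x t - 2 * Ci * z * dt (Gn z) x t).
Proof.
  apply (polyz_mixed_partials Fc (S n) Fc_smooth z x t
           (fun x s => - Ci * ux x s * Fn z x s - 2 * Ci * z * Gn z x s)); [apply Fn_x|].
  eapply is_Cderive_replace.
  - Cderive_rules; first [polyz_leaf | apply ux_dt].
  - cbv beta; ring.
Qed.

Lemma Gn_xt (z : C) (x t : R) :
  is_Cderive (fun y => dt (Gn z) y t) x (Ci * (dt (Hn z) x t - dt (Fn z) x t)).
Proof.
  apply (polyz_mixed_partials Gc n Gc_smooth z x t (fun x s => Ci * (Hn z x s - Fn z x s)));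
    [apply Gn_x|].
  eapply is_Cderive_replace.
  - Cderive_rules; polyz_leaf.
  - cbv beta; ring.
Qed.

Lemma defF_dx (z : C) (x t : R) :
  Cderive (fun y => defF z y t) x = - Ci * ux x t * defF z x t - 2 * Ci * defG z x t.
Proof.
  apply is_Cderive_unique; eapply is_Cderive_replace.
  - Cderive_rules; first [polyz_leaf | apply Fn_xt].
  - cbv beta; rewrite Gn_x, Fr_x, Fn_x, (u_xt z); ring [Ci_sqr].
Qed.

Lemma defG_dx (z : C) (x t : R) :
  Cderive (fun y => defG z y t) x = Ci * z * (defH z x t - defF z x t).
Proof.
  apply is_Cderive_unique; eapply is_Cderive_replace.
  - Cderive_rules; first [polyz_leaf | apply Gn_xt].
  - cbv beta; rewrite Fn_x, Hr_x, Fr_x, Hn_x; ring [Ci_sqr].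
Qed.

Lemma defects_constraint (z : C) (x t : R) :
  z <> 0 -> 2 * Gn z x t * defG z x t + Hn z x t * defF z x t + Fn z x t * defH z x t = 0.
Proof.
  intros hz; apply (Cmult_eq_0_l z); [exact hz|].
  assert (R_t : is_Cderive (fun s => z * z * (Gn z x s * Gn z x s) + z * Fn z x s * Hn z x s) t 0).
  { apply (is_Cderive_ext (fun _ => Rcurve z)); [intros; symmetry; apply curve|].
    apply is_Cderive_const. }
  etransitivity;
    [|symmetry; apply (is_Cderive_eq _ _ _ _ R_t); Cderive_rules; polyz_leaf].
  cbv beta; ring.
Qed.

Lemma defF_poly (t : R) : poly_lt (S (n + r)) (fun z y => defF z y t).
Proof.
  apply poly_lt_minus; [apply (poly_lt_mono (S n)); [now apply poly_lt_dt_polyz | lia]|].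
  apply poly_lt_cscal, poly_lt_minus.
  - apply (poly_lt_mul n r); [now apply poly_lt_polyz | now apply poly_lt_polyz | lia].
  - apply (poly_lt_mul r n); [now apply poly_lt_polyz | now apply poly_lt_polyz | lia].
Qed.

Lemma defG_poly (t : R) : poly_lt (S (n + r)) (fun z y => defG z y t).
Proof.
  apply poly_lt_minus;
    [apply (poly_lt_mono (S n)); [now apply poly_lt_shift, poly_lt_dt_polyz | lia]|].
  apply poly_lt_minus.
  - apply (poly_lt_mul (S n) r); [now apply poly_lt_polyz | now apply poly_lt_polyz | lia].
  - apply (poly_lt_mul (S r) n); [now apply poly_lt_polyz | now apply poly_lt_polyz | lia].
Qed.

Lemma defH_poly (t : R) : poly_lt (S (n + r)) (fun z y => defH z y t).
Proof.
  apply poly_lt_minus; [apply (poly_lt_mono (S n)); [now apply poly_lt_dt_polyz | lia]|].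
  apply poly_lt_cscal, poly_lt_minus.
  - apply (poly_lt_mul r n); [now apply poly_lt_polyz | now apply poly_lt_polyz | lia].
  - apply (poly_lt_mul n r); [now apply poly_lt_polyz | now apply poly_lt_polyz | lia].
Qed.

Lemma poly_lt_monic (c : nat -> R -> R -> C) (t : R) :
  (forall k, smoothC (c k)) -> (forall x t, c n x t = 1) ->
  poly_lt n (fun z y => polyz c (S n) z y t - z ^ n).
Proof.
  intros c_smooth c_monic; apply (poly_lt_ext n (fun z y => polyz c n z y t)).
  - intros z y; rewrite !polyz_peval; cbn [peval]; rewrite c_monic; ring.
  - now apply poly_lt_polyz.
Qed.

Lemma lax_equations (z : C) (x t : R) :
  dt (Fn z) x t = 2 * (Gn z x t * Fr z x t - Gr z x t * Fn z x t)
  /\ z * dt (Gn z) x t = Fn z x t * Hr z x t - Fr z x t * Hn z x t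
  /\ dt (Hn z) x t = 2 * (Gr z x t * Hn z x t - Gn z x t * Hr z x t).
Proof.
  destruct (lax_defects_vanish n (S (n + r)) (fun y => ux y t)
              (fun z y => Fn z y t) (fun z y => Gn z y t) (fun z y => Hn z y t)
              (fun z y => defF z y t) (fun z y => defG z y t) (fun z y => defH z y t))
    with (z := z) (y := x) as (hF & hG & hH).
  - now apply poly_lt_polyz.
  - now apply poly_lt_monic.
  - now apply poly_lt_monic.
  - apply defF_poly.
  - apply defG_poly.
  - apply defH_poly.
  - intros; apply defF_dx.
  - intros; apply defG_dx.
  - intros; now apply defects_constraint.
  - now split; [|split]; apply Ceq_minus.
Qed.

End LaxEquations.

Lemma lax_pair_iff (F G H f g h Ft Gt Ht z : C) :
  z <> 0 ->
  (Ft = 2 * (G * f - g * F) /\ z * Gt = F * h - f * H /\ Ht = 2 * (g * H - G * h)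
   <-> Vmat Ft Gt Ht z = comm2 (Vmat f g h z) (Vmat F G H z)).
Proof.
  intros hz; unfold comm2, M2sub, M2mul, Vmat; cbn [m11 m12 m21 m22]; split.
  - intros (eF & eG & eH).
    replace Gt with ((F * h - f * H) / z) by (rewrite <- eG; field; exact hz).
    rewrite eF, eH; f_equal; field; exact hz.
  - intros E.
    pose proof (f_equal m11 E) as e11; pose proof (f_equal m12 E) as e12;
      pose proof (f_equal m21 E) as e21; cbn [m11 m12 m21] in e11, e12, e21.
    split; [|split].
    + replace Ft with (z * (Ft / z)) by (field; exact hz).
      rewrite e12; field; exact hz.
    + replace Gt with (- - Gt) by ring.
      rewrite e11; field; exact hz.
    + rewrite e21; ring.
Qed.

Theorem lemma4p2
  (n r : nat) (u : R -> R -> R)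
  (Fc Gc Hc Ftc Gtc Htc : nat -> R -> R -> C) (E : nat -> C) :
  (1 <= n)%nat ->
  smoothR u ->
  (forall k, smoothC (Fc k)) -> (forall k, smoothC (Gc k)) ->
  (forall k, smoothC (Hc k)) -> (forall k, smoothC (Ftc k)) ->
  (forall k, smoothC (Gtc k)) -> (forall k, smoothC (Htc k)) ->
  (forall x t, Fc n x t = 1) -> (forall x t, Hc n x t = 1) ->
  (forall z x t,
     dx (polyz Fc (S n) z) x t
       = - Ci * RtoC (Derive (fun y => u y t) x) * polyz Fc (S n) z x t
         - 2 * Ci * z * polyz Gc n z x t) ->
  (forall z x t,
     dx (polyz Hc (S n) z) x t
       = Ci * RtoC (Derive (fun y => u y t) x) * polyz Hc (S n) z x t
         + 2 * Ci * z * polyz Gc n z x t) ->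
  (forall z x t,
     dx (polyz Gc n z) x t = Ci * (polyz Hc (S n) z x t - polyz Fc (S n) z x t)) ->
  (forall z x t,
     RtoC (Derive (fun s => Derive (fun y => u y s) x) t)
       = - 2 * Ci * dx (polyz Gtc r z) x t
         - 2 * (polyz Htc (S r) z x t - polyz Ftc (S r) z x t)) ->
  (forall z x t,
     dx (polyz Ftc (S r) z) x t
       = - Ci * RtoC (Derive (fun y => u y t) x) * polyz Ftc (S r) z x t
         - 2 * Ci * z * polyz Gtc r z x t) ->
  (forall z x t,
     dx (polyz Htc (S r) z) x t
       = Ci * RtoC (Derive (fun y => u y t) x) * polyz Htc (S r) z x t
         + 2 * Ci * z * polyz Gtc r z x t) ->
  E O = 0 ->
  (forall m, (1 <= m <= 2 * n)%nat -> E m <> 0) ->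
  (forall z x t,
     z * z * (polyz Gc n z x t * polyz Gc n z x t)
       + z * polyz Fc (S n) z x t * polyz Hc (S n) z x t
       = prodroots E (2 * n) z) ->
  (forall z x t,
     dt (polyz Fc (S n) z) x t
       = 2 * (polyz Gc n z x t * polyz Ftc (S r) z x t
              - polyz Gtc r z x t * polyz Fc (S n) z x t)
     /\ z * dt (polyz Gc n z) x t
       = polyz Fc (S n) z x t * polyz Htc (S r) z x t
         - polyz Ftc (S r) z x t * polyz Hc (S n) z x t
     /\ dt (polyz Hc (S n) z) x t
       = 2 * (polyz Gtc r z x t * polyz Hc (S n) z x t
              - polyz Gc n z x t * polyz Htc (S r) z x t))
  /\
  (forall (z : C) (x t : R), z <> 0 ->
     ((dt (polyz Fc (S n) z) x t
         = 2 * (polyz Gc n z x t * polyz Ftc (S r) z x t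
                - polyz Gtc r z x t * polyz Fc (S n) z x t)
       /\ z * dt (polyz Gc n z) x t
         = polyz Fc (S n) z x t * polyz Htc (S r) z x t
           - polyz Ftc (S r) z x t * polyz Hc (S n) z x t
       /\ dt (polyz Hc (S n) z) x t
         = 2 * (polyz Gtc r z x t * polyz Hc (S n) z x t
                - polyz Gc n z x t * polyz Htc (S r) z x t))
      <->
      Vmat (dt (polyz Fc (S n) z) x t) (dt (polyz Gc n z) x t)
           (dt (polyz Hc (S n) z) x t) z
      = comm2 (Vmat (polyz Ftc (S r) z x t) (polyz Gtc r z x t)
                    (polyz Htc (S r) z x t) z)
              (Vmat (polyz Fc (S n) z x t) (polyz Gc n z x t)
                    (polyz Hc (S n) z x t) z))).
Proof.
  intros _ Hu HFc HGc HHc HFtc HGtc HHtc HFn HHn hFx hHx hGx hu hfx hhx _ _ HR.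
  split.
  - intros z x t; eapply lax_equations; eassumption.
  - intros z x t hz; now apply lax_pair_iff.
Qed.
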